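(* The two-dimensional subalgebras of ${\rm A}_4$ are exactly $\langle e_1,e_2\rangle$, $\langle e_1\pm\mathrm{i}e_3,e_2\rangle$, $\langle e_1-e_2,e_3\rangle$ and $\langle e_1,\pm\mathrm{i}e_2+e_3\rangle$. Up to automorphisms of ${\rm A}_4$, every two-dimensional subalgebra is equivalent to one of $\langle e_1,e_2\rangle$, $\langle e_1+\mathrm{i}e_3,e_2\rangle$, $\langle e_1-e_2,e_3\rangle$, $\langle e_1,\mathrm{i}e_2+e_3\rangle$.
   Context: ${\rm A}_4$ is the complex algebra with basis $e_1,e_2,e_3$, unit $e_1$ ($e_1e_i=e_ie_1=e_i$), $e_2e_2=e_2$ and $e_3e_3=-e_1+e_2$; all other products of basis elements are zero. $\mathrm{i}=\sqrt{-1}$. A subalgebra is a linear subspace closed under multiplication (it need not contain $e_1$). Equivalence up to automorphisms means one is mapped onto the other by an algebra automorphism. $\langle S\rangle$ denotes linear span. *)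

(* The algebra A_4 over an algebraically closed numeric field C
   (containing 'i with 'i^2 = -1); C = complex numbers is an instance. *)
From HB Require Import structures.
From mathcomp Require Import all_boot all_order all_algebra.
Set Implicit Arguments. Unset Strict Implicit. Unset Printing Implicit Defensive.
Import Order.TTheory GRing.Theory Num.Theory.
Local Open Scope ring_scope.

Section A4.
Variable C : numClosedFieldType.

Definition A4e (i : 'I_3) : 'rV[C]_3 := delta_mx 0 i.
Definition A4e1 : 'rV[C]_3 := A4e 0.
Definition A4e2 : 'rV[C]_3 := A4e 1.
Definition A4e3 : 'rV[C]_3 := A4e 2.

Definition A4tbl (i j : 'I_3) : 'rV[C]_3 :=
  match nat_of_ord i, nat_of_ord j with
  | 0%N, _ => A4e j
  | _, 0%N => A4e i
  | 1%N, 1%N => A4e2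
  | 2%N, 2%N => - A4e1 + A4e2
  | _, _ => 0
  end.

Definition A4mul (x y : 'rV[C]_3) : 'rV[C]_3 :=
  \sum_(i < 3) \sum_(j < 3) (x 0 i * y 0 j) *: A4tbl i j.

Definition A4subalg (U : {vspace 'rV[C]_3}) : Prop :=
  forall x y, x \in U -> y \in U -> A4mul x y \in U.

Definition A4aut (f : 'rV[C]_3 -> 'rV[C]_3) : Prop :=
  [/\ linear f, bijective f & forall x y, f (A4mul x y) = A4mul (f x) (f y)].

Definition A4equiv (U V : {vspace 'rV[C]_3}) : Prop :=
  exists f, A4aut f /\ (forall v, v \in V <-> exists2 u, u \in U & f u = v).

End A4.

From HB Require Import structures.
From mathcomp Require Import all_boot all_order all_algebra.
From mathcomp Require Import ring.
Import Order.TTheory GRing.Theory Num.Theory.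
Local Open Scope ring_scope.
Set Implicit Arguments. Unset Strict Implicit. Unset Printing Implicit Defensive.

(* A_4 is isomorphic to C x C x C: e2, u = (e1 - e2 + i e3)/2 and w = (e1 - e2 - i e3)/2
   are orthogonal idempotents with sum e1, and in the coordinates y of the basis (e2, u, w)
   the product is componentwise.  A two-dimensional subspace is a plane a.y = 0; testing
   closure on y = (a2, -a1, 0) and its square gives a1 a2 (a1 + a2) = 0, and likewise for
   the other pairs of indices, so a is a multiple of a coordinate vector or of a difference
   of two of them.  These six planes are the listed subalgebras, and the automorphism
   e3 |-> -e3, which swaps u and w, maps y2 = 0 to y3 = 0 and y1 = y2 to y1 = y3. *)

Section Annihilator.
Variables (F : fieldType) (m n : nat).
Implicit Types (B : 'M[F]_(m, n)) (x : 'rV[F]_n).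

Definition annih B : {vspace 'rV[F]_n} :=
  lker (linfun (mulmxr B^T) : 'Hom('rV_n, 'rV_m)).

Lemma mem_annih B x : (x \in annih B) = (x *m B^T == 0).
Proof. by rewrite memv_ker lfunE. Qed.

Lemma dim_annih B : (n - m <= \dim (annih B))%N.
Proof.
pose f : 'Hom('rV[F]_n, 'rV[F]_m) := linfun (mulmxr B^T).
have := limg_ker_dim f fullv; have := dimvS (subvf (limg f)).
rewrite capfv !dimvf /= !dim_matrix !mul1r => le_img dimE.
by rewrite leq_subLR -{1}dimE [(m + _)%N]addnC leq_add2l.
Qed.

Lemma annih_fullv_eq0 B : annih B = fullv -> B = 0.
Proof.
move=> Bfull; apply: trmx_inj; apply/row_matrixP => i; rewrite trmx0 row0 rowE.
by apply/eqP; rewrite -mem_annih Bfull memvf.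
Qed.

End Annihilator.

Section Hyperplanes.
Variables (F : fieldType) (n : nat).
Implicit Types (u : 'rV[F]_n.+1) (U : {vspace 'rV[F]_n.+1}).

Lemma dim_annih_row u : u != 0 -> \dim (annih u) = n.
Proof.
move=> u_neq0; have := dim_annih u; rewrite subn1 /= => ge_n.
have le_full := dimvS (subvf (annih u)); rewrite dimvf /= dim_matrix mul1r in le_full.
have neq_full : \dim (annih u) != n.+1.
  apply: contra_neq u_neq0 => dimE; apply: annih_fullv_eq0; apply/eqP.
  by rewrite eqEdim subvf dimvf /= dim_matrix mul1r dimE.
by apply/eqP; rewrite eqn_leq ge_n -ltnS ltn_neqAle neq_full le_full.
Qed.

Lemma hyperplane_annih U : \dim U = n -> exists2 u : 'rV_n.+1, u != 0 & U = annih u.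
Proof.
move=> dimU; pose B : 'M[F]_(\dim U, n.+1) := \matrix_i (vbasis U)`_i.
have : annih B != 0%VS.
  by rewrite -dimv_eq0 -lt0n (leq_trans _ (dim_annih B)) // dimU subSnn.
rewrite -vpick0; set u := vpick _ => u_neq0; exists u => //.
have /andP[/eqP spanU _] := vbasisP U.
apply/eqP; rewrite eqEdim dim_annih_row // dimU leqnn andbT -{1}spanU.
apply/span_subvP => _ /(nthP 0)[i lt_i <-]; rewrite size_tuple in lt_i.
have /eqP uBT0 : u *m B^T == 0 by rewrite -mem_annih memv_pick.
rewrite mem_annih -(rowK (fun i : 'I_(\dim U) => (vbasis U)`_i) (Ordinal lt_i)).
by rewrite -row_mul -[_ *m _]trmxK trmx_mul trmxK uBT0 trmx0 row0.
Qed.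

Lemma free_pair (a b : 'rV[F]_n.+1) (j : 'I_n.+1) :
  a 0 j != 0 -> b 0 j = 0 -> b != 0 -> free [:: a; b].
Proof.
move=> a_j b_j b_neq0; rewrite free_cons seq1_free b_neq0 andbT span_seq1.
by apply/vlineP => -[k a_eq]; move: a_j; rewrite a_eq mxE b_j mulr0 eqxx.
Qed.

End Hyperplanes.

Lemma opposite_pair_cases (F : fieldType) (a1 a2 a3 : F) : 2 != 0 :> F ->
    a1 * a2 * (a1 + a2) = 0 -> a1 * a3 * (a1 + a3) = 0 -> a2 * a3 * (a2 + a3) = 0 ->
  exists k, (a1, a2, a3) = (k * 0, k * 1, k * -1) \/ (a1, a2, a3) = (k * 0, k * 0, k * 1) \/
    (a1, a2, a3) = (k * 0, k * 1, k * 0) \/ (a1, a2, a3) = (k * 1, k * 0, k * 0) \/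
    (a1, a2, a3) = (k * 1, k * 0, k * -1) \/ (a1, a2, a3) = (k * 1, k * -1, k * 0).
Proof.
move=> two_neq0 r12 r13 r23.
have opp (a b : F) : a != 0 -> b != 0 -> a * b * (a + b) = 0 -> b = - a.
  move=> a_neq0 b_neq0 /eqP; rewrite !mulf_eq0 (negbTE a_neq0) (negbTE b_neq0) /=.
  by rewrite addr_eq0 => /eqP->; rewrite opprK.
have [a1_0|a1_neq0] := eqVneq a1 0.
  have [a2_0|a2_neq0] := eqVneq a2 0.
    by exists a3; right; left; rewrite a1_0 a2_0 !(mulr0, mulr1).
  have [a3_0|a3_neq0] := eqVneq a3 0.
    by exists a2; do 2 right; left; rewrite a1_0 a3_0 !(mulr0, mulr1).
  exists a2; left.
  by rewrite a1_0 (opp _ _ a2_neq0 a3_neq0 r23) !(mulr0, mulr1, mulrN1).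
have [a2_0|a2_neq0] := eqVneq a2 0.
  have [a3_0|a3_neq0] := eqVneq a3 0.
    by exists a1; do 3 right; left; rewrite a2_0 a3_0 !(mulr0, mulr1).
  exists a1; do 4 right; left.
  by rewrite a2_0 (opp _ _ a1_neq0 a3_neq0 r13) !(mulr0, mulr1, mulrN1).
have a2E := opp _ _ a1_neq0 a2_neq0 r12.
have [a3_0|a3_neq0] := eqVneq a3 0.
  by exists a1; do 5 right; rewrite a2E a3_0 !(mulr0, mulr1, mulrN1).
have a3E := opp _ _ a1_neq0 a3_neq0 r13.
have /eqP : a1 * a1 * a1 * 2 = 0 by rewrite -[RHS]oppr0 -r23 a2E a3E; ring.
by rewrite !mulf_eq0 (negbTE a1_neq0) (negbTE two_neq0).
Qed.

Section A4.
Variable C : numClosedFieldType.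
Local Notation V := 'rV[C]_3.
Local Notation e1 := (A4e1 C).
Local Notation e2 := (A4e2 C).
Local Notation e3 := (A4e3 C).
Implicit Types (a b c k : C) (x : V) (U : {vspace V}).

Definition row3 a b c : V := \row_j [:: a; b; c]`_j.

Lemma row3E x : x = row3 (x 0 0) (x 0 1) (x 0 2).
Proof.
by apply/rowP => -[[|[|[|//]]] j]; rewrite mxE //=; congr (x 0 _); apply: val_inj.
Qed.

Lemma row3D a b c a' b' c' : row3 a b c + row3 a' b' c' = row3 (a + a') (b + b') (c + c').
Proof. by apply/rowP => -[[|[|[|//]]] j]; rewrite !mxE. Qed.

Lemma row3Z k a b c : k *: row3 a b c = row3 (k * a) (k * b) (k * c).
Proof. by apply/rowP => -[[|[|[|//]]] j]; rewrite !mxE. Qed.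

Lemma row3N a b c : - row3 a b c = row3 (- a) (- b) (- c).
Proof. by rewrite -scaleN1r row3Z !mulN1r. Qed.

Lemma row3_eq0 a b c : (row3 a b c == 0) = [&& a == 0, b == 0 & c == 0].
Proof.
apply/eqP/and3P => [/rowP E | [/eqP-> /eqP-> /eqP->]].
  by split; apply/eqP; [have := E 0 | have := E 1 | have := E 2]; rewrite !mxE.
by apply/rowP => -[[|[|[|//]]] j]; rewrite !mxE.
Qed.

Lemma A4eE (i : 'I_3) : A4e C i = row3 (i == 0)%:R (i == 1)%:R (i == 2)%:R.
Proof. by apply/rowP => -[[|[|[|//]]] j]; rewrite !mxE; case: i => -[|[|[|]]]. Qed.

Lemma A4e1_row3 : e1 = row3 1 0 0. Proof. by rewrite /A4e1 A4eE. Qed.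
Lemma A4e2_row3 : e2 = row3 0 1 0. Proof. by rewrite /A4e2 A4eE. Qed.
Lemma A4e3_row3 : e3 = row3 0 0 1. Proof. by rewrite /A4e3 A4eE. Qed.

Lemma A4mul_row3 a b c a' b' c' : A4mul (row3 a b c) (row3 a' b' c') =
  row3 (a * a' - c * c') (a * b' + b * a' + b * b' + c * c') (a * c' + c * a').
Proof.
rewrite /A4mul !big_ord_recr !big_ord0 /= !add0r /A4tbl /= /A4e1 /A4e2 !A4eE !mxE /=.
by rewrite !scaler0 !addr0 !(row3N, row3Z, row3D); congr row3; ring.
Qed.

Lemma mem_annih_row3 a b c a' b' c' :
  (row3 a b c \in annih (row3 a' b' c')) = (a * a' + b * b' + c * c' == 0).
Proof.
rewrite mem_annih [_ *m _]mx11_scalar !mxE !big_ord_recr big_ord0 /= !mxE /= add0r.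
apply/eqP/eqP => [/matrixP/(_ 0 0)|->]; rewrite ?mxE ?eqxx //.
by apply/matrixP=> i j; rewrite !ord1 !mxE.
Qed.

Lemma two_neq0 : 2 != 0 :> C.
Proof. by rewrite pnatr_eq0. Qed.

(* [y1 e2 + y2 u + y3 w] *)
Definition idem_row y1 y2 y3 : V :=
  row3 ((y2 + y3) / 2) (y1 - (y2 + y3) / 2) ('i * (y2 - y3) / 2).

Lemma idem_row_onto x : exists y1 y2 y3, x = idem_row y1 y2 y3.
Proof.
exists (x 0 0 + x 0 1), (x 0 0 - 'i * x 0 2), (x 0 0 + 'i * x 0 2).
by have := two_neq0; rewrite [LHS]row3E /idem_row => ?; congr row3; field: (sqrCi C).
Qed.

Lemma A4mul_idem y1 y2 y3 z1 z2 z3 :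
  A4mul (idem_row y1 y2 y3) (idem_row z1 z2 z3) = idem_row (y1 * z1) (y2 * z2) (y3 * z3).
Proof.
by have := two_neq0; rewrite /idem_row A4mul_row3 => ?; congr row3; field: (sqrCi C).
Qed.

Definition plane a1 a2 a3 : {vspace V} :=
  annih (row3 (a1 + a2 + a3) a1 (- 'i * (a2 - a3))).

Lemma mem_plane a1 a2 a3 y1 y2 y3 :
  (idem_row y1 y2 y3 \in plane a1 a2 a3) = (a1 * y1 + a2 * y2 + a3 * y3 == 0).
Proof.
have := two_neq0; rewrite mem_annih_row3 => ?.
by congr (_ == 0); field: (sqrCi C).
Qed.

Lemma dim_plane a1 a2 a3 :
  [|| a1 != 0, a2 != 0 | a3 != 0] -> \dim (plane a1 a2 a3) = 2%N.
Proof.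
move=> a_neq0; apply: dim_annih_row; apply: contraTneq a_neq0.
move/eqP; rewrite row3_eq0 mulf_eq0 oppr_eq0 (negbTE (neq0Ci C)) subr_eq0 /=.
case/and3P => sum0 /eqP a1_0 /eqP a23; move: sum0.
by rewrite a1_0 a23 add0r -mulr2n mulrn_eq0 /= => /eqP->; rewrite eqxx.
Qed.

Lemma hyperplane_plane U : \dim U = 2%N -> exists a1 a2 a3, U = plane a1 a2 a3.
Proof.
move=> /hyperplane_annih[u _ ->]; rewrite [u]row3E /plane.
exists (u 0 1), ((u 0 0 - u 0 1 + 'i * u 0 2) / 2), ((u 0 0 - u 0 1 - 'i * u 0 2) / 2).
by have := two_neq0 => ?; congr annih; congr row3; field: (sqrCi C).
Qed.

Lemma plane_scaled k a1 a2 a3 : \dim (plane (k * a1) (k * a2) (k * a3)) = 2%N ->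
  plane (k * a1) (k * a2) (k * a3) = plane a1 a2 a3.
Proof.
move=> dim2; apply/esym/eqP; rewrite eqEdim dim2 (dim_annih _ : (3 - 1 <= _)%N) andbT.
apply/subvP => x; have [y1 [y2 [y3 ->]]] := idem_row_onto x.
by rewrite !mem_plane => /eqP sum0; apply/eqP; rewrite -(mulr0 k) -sum0; ring.
Qed.

Lemma subalg_planeP a1 a2 a3 : A4subalg (plane a1 a2 a3) <->
  (forall y1 y2 y3 z1 z2 z3,
     a1 * y1 + a2 * y2 + a3 * y3 = 0 -> a1 * z1 + a2 * z2 + a3 * z3 = 0 ->
     a1 * (y1 * z1) + a2 * (y2 * z2) + a3 * (y3 * z3) = 0).
Proof.
split=> [subP y1 y2 y3 z1 z2 z3 /eqP y_in /eqP z_in | closed x x'].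
  by apply/eqP; rewrite -mem_plane -A4mul_idem; apply: subP; rewrite mem_plane.
have [y1 [y2 [y3 ->]]] := idem_row_onto x; have [z1 [z2 [z3 ->]]] := idem_row_onto x'.
by rewrite A4mul_idem !mem_plane => /eqP y_in /eqP z_in; apply/eqP/closed.
Qed.

Lemma subalg_plane_rel a1 a2 a3 : A4subalg (plane a1 a2 a3) ->
  [/\ a1 * a2 * (a1 + a2) = 0, a1 * a3 * (a1 + a3) = 0 & a2 * a3 * (a2 + a3) = 0].
Proof.
move/subalg_planeP => closed; split.
- by rewrite -(closed a2 (- a1) 0 a2 (- a1) 0); ring.
- by rewrite -(closed a3 0 (- a1) a3 0 (- a1)); ring.
- by rewrite -(closed 0 a3 (- a2) 0 a3 (- a2)); ring.
Qed.

Lemma span_pair_plane (x y : V) a1 a2 a3 (j : 'I_3) :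
    [|| a1 != 0, a2 != 0 | a3 != 0] -> x 0 0 = 1 -> y 0 0 = 0 -> y 0 j = 1 ->
  x \in plane a1 a2 a3 -> y \in plane a1 a2 a3 -> span [:: x; y] = plane a1 a2 a3.
Proof.
move=> a_neq0 x0 y0 yj x_in y_in; apply: span_basis.
rewrite basisEfree dim_plane // (free_pair (j := 0)) ?x0 ?oner_eq0 //=.
  by apply/andP; split=> //; apply/span_subvP => _ /[!inE] /orP[]/eqP->.
by apply: contra_eq_neq yj => ->; rewrite mxE eq_sym oner_eq0.
Qed.

Local Ltac solve_span_plane :=
  rewrite ?A4e1_row3 ?A4e2_row3 ?A4e3_row3 ?(row3N, row3Z, row3D) /plane
    ?mem_annih_row3 ?mxE /= ?oner_eq0 ?oppr_eq0 ?orbT //;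
  first [by apply/eqP; ring: (sqrCi C) | ring: (sqrCi C)].

Lemma span_e1_e2 : span [:: e1; e2] = plane 0 1 (-1).
Proof. by apply: (span_pair_plane (j := 1)); solve_span_plane. Qed.

Lemma span_e1_pi_e3_e2 : span [:: e1 + 'i *: e3; e2] = plane 0 0 1.
Proof. by apply: (span_pair_plane (j := 1)); solve_span_plane. Qed.

Lemma span_e1_mi_e3_e2 : span [:: e1 - 'i *: e3; e2] = plane 0 1 0.
Proof. by apply: (span_pair_plane (j := 1)); solve_span_plane. Qed.

Lemma span_e1_m_e2_e3 : span [:: e1 - e2; e3] = plane 1 0 0.
Proof. by apply: (span_pair_plane (j := 2)); solve_span_plane. Qed.

Lemma span_e1_pi_e2_e3 : span [:: e1; 'i *: e2 + e3] = plane 1 0 (-1).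
Proof. by apply: (span_pair_plane (j := 2)); solve_span_plane. Qed.

Lemma span_e1_mi_e2_e3 : span [:: e1; - 'i *: e2 + e3] = plane 1 (-1) 0.
Proof. by apply: (span_pair_plane (j := 2)); solve_span_plane. Qed.

Lemma subalg_dim2_planeP U : A4subalg U /\ \dim U = 2%N <->
  U = plane 0 1 (-1) \/ U = plane 0 0 1 \/ U = plane 0 1 0 \/
  U = plane 1 0 0 \/ U = plane 1 0 (-1) \/ U = plane 1 (-1) 0.
Proof.
split=> [[subU dimU] | U_std].
  have [a1 [a2 [a3 U_eq]]] := hyperplane_plane dimU; rewrite {}U_eq in subU dimU *.
  have [r12 r13 r23] := subalg_plane_rel subU.
  have [k shape] := opposite_pair_cases two_neq0 r12 r13 r23.
  case: shape => [|[|[|[|[|]]]]] [-> -> ->] in dimU *; rewrite plane_scaled //.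
  - by left.
  - by right; left.
  - by do 2 right; left.
  - by do 3 right; left.
  - by do 4 right; left.
  - by do 5 right.
split; last first.
  by case: U_std => [|[|[|[|[|]]]]] ->; apply: dim_plane; rewrite ?oner_eq0 ?oppr_eq0 ?orbT.
case: U_std => [|[|[|[|[|]]]]] ->; apply/subalg_planeP => y1 y2 y3 z1 z2 z3;
  rewrite !(mul0r, mul1r, mulN1r, add0r, addr0).
- by move=> /subr0_eq-> /subr0_eq->; rewrite subrr.
- by move=> -> _; rewrite mul0r.
- by move=> -> _; rewrite mul0r.
- by move=> -> _; rewrite mul0r.
- by move=> /subr0_eq-> /subr0_eq->; rewrite subrr.
- by move=> /subr0_eq-> /subr0_eq->; rewrite subrr.
Qed.

Definition A4swap x : V := row3 (x 0 0) (x 0 1) (- x 0 2).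

Lemma A4swapK : involutive A4swap.
Proof. by move=> x; rewrite /A4swap !mxE /= opprK -row3E. Qed.

Lemma A4swap_idem y1 y2 y3 : A4swap (idem_row y1 y2 y3) = idem_row y1 y3 y2.
Proof. by rewrite /A4swap /idem_row !mxE /=; congr row3; ring. Qed.

Lemma A4swap_aut : A4aut A4swap.
Proof.
split; first by move=> k x x'; rewrite /A4swap !mxE row3Z row3D; congr row3; ring.
  by exists A4swap; apply: A4swapK.
move=> x x'; have [y1 [y2 [y3 ->]]] := idem_row_onto x.
by have [z1 [z2 [z3 ->]]] := idem_row_onto x'; rewrite A4mul_idem !A4swap_idem A4mul_idem.
Qed.

Lemma mem_plane_swap a1 a2 a3 x :
  (A4swap x \in plane a1 a2 a3) = (x \in plane a1 a3 a2).
Proof.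
by have [y1 [y2 [y3 ->]]] := idem_row_onto x; rewrite A4swap_idem !mem_plane addrAC.
Qed.

Lemma A4equiv_refl U : A4equiv U U.
Proof.
exists id; split; first by split=> //; exists id.
by move=> v; split=> [v_in | [u u_in <-] //]; exists v.
Qed.

Lemma A4equiv_swap a1 a2 a3 : A4equiv (plane a1 a2 a3) (plane a1 a3 a2).
Proof.
exists A4swap; split; first exact: A4swap_aut.
move=> v; split=> [v_in | [u u_in <-]]; last by rewrite mem_plane_swap.
by exists (A4swap v); rewrite ?A4swapK ?mem_plane_swap.
Qed.

End A4.

Theorem mainTheorem11 (C : numClosedFieldType) :
  (forall U : {vspace 'rV[C]_3},
     (A4subalg U /\ \dim U = 2%N) <->
     (U = (span [:: A4e1 C; A4e2 C]) \/
      U = (span [:: A4e1 C + 'i *: A4e3 C; A4e2 C]) \/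
      U = (span [:: A4e1 C - 'i *: A4e3 C; A4e2 C]) \/
      U = (span [:: A4e1 C - A4e2 C; A4e3 C]) \/
      U = (span [:: A4e1 C; 'i *: A4e2 C + A4e3 C]) \/
      U = (span [:: A4e1 C; - 'i *: A4e2 C + A4e3 C])))
  /\
  (forall U : {vspace 'rV[C]_3}, A4subalg U -> \dim U = 2%N ->
     [\/ A4equiv U (span [:: A4e1 C; A4e2 C]),
         A4equiv U (span [:: A4e1 C + 'i *: A4e3 C; A4e2 C]),
         A4equiv U (span [:: A4e1 C - A4e2 C; A4e3 C])
       | A4equiv U (span [:: A4e1 C; 'i *: A4e2 C + A4e3 C])]).
Proof.
rewrite span_e1_e2 span_e1_pi_e3_e2 span_e1_mi_e3_e2.
rewrite span_e1_m_e2_e3 span_e1_pi_e2_e3 span_e1_mi_e2_e3.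
split=> [U | U subU dimU]; first exact: subalg_dim2_planeP.
case: (proj1 (subalg_dim2_planeP U) (conj subU dimU)) => [|[|[|[|[|]]]]] ->.
- by apply: Or41; apply: A4equiv_refl.
- by apply: Or42; apply: A4equiv_refl.
- by apply: Or42; apply: A4equiv_swap.
- by apply: Or43; apply: A4equiv_refl.
- by apply: Or44; apply: A4equiv_refl.
- by apply: Or44; apply: A4equiv_swap.
Qed.
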